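(* Assume the pair $(\mathcal D,\mathcal F)$ is good. Then for every $\varepsilon\in(0,1)$, $\mathrm{RiskA}(\varepsilon)\le\Phi_*(\ln(2/\varepsilon))$. More precisely, for every $\delta>0$ there exist $\phi\in\mathcal F$ and $c\in\mathbb R$ such that the affine estimate $\hat g=\phi+c$ satisfies $\mathrm{Risk}(\hat g;\varepsilon)\le\Phi_*(\ln(2/\varepsilon))+\delta$.
   Context: Let $(\Omega,P)$ be a Polish space equipped with a $\sigma$-finite Borel measure $P$, let $\mathcal M\subset\mathbb R^m$, and let $\mathcal D=\{p_\mu\}_{\mu\in\mathcal M}$ be a parametric density family: for each $\mu\in\mathcal M$, $p_\mu$ is a nonnegative Borel function on $\Omega$ with $\int_\Omega p_\mu\,dP=1$. Let $\mathcal F$ be a finite-dimensional linear space of Borel functions on $\Omega$ containing the constants. The pair $(\mathcal D,\mathcal F)$ is called good if: (1) $\mathcal M$ is an open convex subset of $\mathbb R^m$; (2) $p_\mu(\omega)>0$ for all $\mu\in\mathcal M$, $\omega\in\Omega$; (3) for all $\mu,\nu\in\mathcal M$ the function $\omega\mapsto\ln(p_\mu(\omega)/p_\nu(\omega))$ belongs to $\mathcal F$; (4) for every $\phi\in\mathcal F$ the function $\mu\mapsto\ln\int_\Omega e^{\phi(\omega)}p_\mu(\omega)P(d\omega)$ is well defined (finite) and concave on $\mathcal M$. Let $X\subset\mathbb R^n$ be a nonempty convex compact set, $x\mapsto A(x)$ an affine map $\mathbb R^n\to\mathbb R^m$ with $A(X)\subset\mathcal M$, and $g\in\mathbb R^n$.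 An observation $\omega$ has density $p_{A(x)}$ w.r.t. $P$ for an unknown $x\in X$; the goal is to estimate $g^Tx$. An estimate is a Borel function $\hat g:\Omega\to\mathbb R$; it is called affine if $\hat g\in\mathcal F$. For $\varepsilon\in(0,1)$ the $\varepsilon$-risk of $\hat g$ is $\mathrm{Risk}(\hat g;\varepsilon)=\inf\{\delta:\ \sup_{x\in X}\mathrm{Prob}_{\omega\sim p_{A(x)}}\{|\hat g(\omega)-g^Tx|>\delta\}<\varepsilon\}$; $\mathrm{RiskA}(\varepsilon)=\inf_{\phi\in\mathcal F}\mathrm{Risk}(\phi;\varepsilon)$. For $r\ge0$, $x,y\in X$, $\phi\in\mathcal F$, $\alpha>0$ define $$\Phi_r(x,y;\phi,\alpha)=g^Tx-g^Ty+\alpha\ln\int_\Omega e^{\phi(\omega)/\alpha}p_{A(y)}(\omega)P(d\omega)+\alpha\ln\int_\Omega e^{-\phi(\omega)/\alpha}p_{A(x)}(\omega)P(d\omega)+2\alpha r,$$ and $\Phi_*(r)=\tfrac12\inf_{\phi\in\mathcal F,\alpha>0}\sup_{x,y\in X}\Phi_r(x,y;\phi,\alpha)$. *)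

From HB Require Import structures.
From mathcomp Require Import all_boot all_order all_algebra.
From mathcomp Require Import all_classical all_reals all_analysis.
Set Implicit Arguments. Unset Strict Implicit. Unset Printing Implicit Defensive.
Import Order.TTheory GRing.Theory Num.Theory.
Import numFieldNormedType.Exports.
Local Open Scope classical_set_scope.
Local Open Scope ring_scope.

Definition polish (R : realType) (T : completePseudoMetricType R) : Prop :=
  hausdorff_space T /\ exists D : set T, countable D /\ dense D.


Definition dotv (R : realType) (k : nat) (u v : 'rV[R]_k) : R :=
  \sum_(i < k) u ord0 i * v ord0 i.

Definition concave_on (R : realType) (k : nat) (S : set 'rV[R]_k)
  (f : 'rV[R]_k -> R) : Prop :=
  forall x y, S x -> S y -> forall t : R, 0 <= t -> t <= 1 ->
    t * f x + (1 - t) * f y <= f (t *: x + (1 - t) *: y).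

Section Setting.
Context (R : realType) (d : measure_display) (Omega : measurableType d)
  (P : {measure set Omega -> \bar R}).

Definition fin_dim_fun_space (F : set (Omega -> R)) : Prop :=
  [/\ (forall phi, F phi -> measurable_fun setT phi),
      (forall c : R, F (fun _ => c)),
      (forall phi psi, F phi -> F psi -> F (fun w => phi w + psi w)),
      (forall (a : R) phi, F phi -> F (fun w => a * phi w)) &
      exists (k : nat) (b : 'I_k -> Omega -> R),
        (forall i, F (b i)) /\
        forall phi, F phi -> exists c : 'I_k -> R,
          phi = fun w => \sum_(i < k) c i * b i w].

Definition density_family (m : nat) (M : set 'rV[R]_m)
  (p : 'rV[R]_m -> Omega -> R) : Prop :=
  forall mu, M mu ->
    [/\ measurable_fun setT (p mu), (forall w, 0 <= p mu w) &
        (\int[P]_w (p mu w)%:E = 1)%E].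

Definition expint (m : nat) (p : 'rV[R]_m -> Omega -> R) (phi : Omega -> R)
  (mu : 'rV[R]_m) : \bar R :=
  (\int[P]_w (expR (phi w) * p mu w)%:E)%E.

(* ln int e^{phi} p_mu dP (as a real number; meaningful when the integral
   is finite and positive, which goodness guarantees) *)
Definition lnexpint (m : nat) (p : 'rV[R]_m -> Omega -> R) (phi : Omega -> R)
  (mu : 'rV[R]_m) : R := ln (fine (expint p phi mu)).

Definition good_pair (m : nat) (M : set 'rV[R]_m) (p : 'rV[R]_m -> Omega -> R)
  (F : set (Omega -> R)) : Prop :=
  [/\ open M /\ convex_set M,
      (forall mu w, M mu -> 0 < p mu w),
      (forall mu nu, M mu -> M nu -> F (fun w => ln (p mu w / p nu w))) &
      (forall phi, F phi ->
         (forall mu, M mu -> (expint p phi mu < +oo)%E) /\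
         concave_on M (lnexpint p phi))].

Definition prob_p (m : nat) (p : 'rV[R]_m -> Omega -> R) (mu : 'rV[R]_m)
  (S : set Omega) : \bar R := (\int[P]_(w in S) (p mu w)%:E)%E.

Section Estimation.
Context (m n : nat) (p : 'rV[R]_m -> Omega -> R) (X : set 'rV[R]_n)
  (B : 'M[R]_(n, m)) (b : 'rV[R]_m) (g : 'rV[R]_n).

Definition Aff (x : 'rV[R]_n) : 'rV[R]_m := x *m B + b.

Definition Risk (ghat : Omega -> R) (eps : R) : \bar R :=
  ereal_inf [set delta%:E | delta in
    [set delta : R | (ereal_sup [set prob_p p (Aff x)
        [set w | (delta < `|ghat w - dotv g x|)%R] | x in X] < eps%:E)%E]].

Definition RiskA (F : set (Omega -> R)) (eps : R) : \bar R :=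
  ereal_inf [set Risk phi eps | phi in F].

Definition Phi_r (r : R) (x y : 'rV[R]_n) (phi : Omega -> R) (alpha : R) : R :=
  dotv g x - dotv g y
  + alpha * lnexpint p (fun w => phi w / alpha) (Aff y)
  + alpha * lnexpint p (fun w => - phi w / alpha) (Aff x)
  + 2 * alpha * r.

Definition Phi_sup (r : R) (phi : Omega -> R) (alpha : R) : \bar R :=
  ereal_sup [set (Phi_r r xy.1 xy.2 phi alpha)%:E
            | xy in [set xy : 'rV[R]_n * 'rV[R]_n | X xy.1 /\ X xy.2]].

Definition Phi_star (F : set (Omega -> R)) (r : R) : \bar R :=
  ((2^-1)%:E * ereal_inf
     [set Phi_sup r pa.1 pa.2
     | pa in [set pa : (Omega -> R) * R | F pa.1 /\ (0 < pa.2)%R]])%E.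
End Estimation.
End Setting.

From HB Require Import structures.
From mathcomp Require Import all_boot all_order all_algebra.
From mathcomp Require Import all_classical all_reals all_analysis.
From mathcomp Require Import measurable_realfun ring lra.
Import Order.TTheory GRing.Theory Num.Theory.
Import numFieldNormedType.Exports.
Local Open Scope classical_set_scope.
Local Open Scope ring_scope.

(* Take (phi, alpha) nearly optimal in the definition of Phi_*, with
   sup_{x,y} Phi_r(x, y; phi, alpha) <= S.  Since Phi_r splits as
   a(x) + a'(y), one can choose c with a(x) <= S/2 - c and a'(y) <= S/2 + c.
   For x in X, the two one-sided tails of phi + c - g^T x beyond S/2 + eta
   are bounded by exponential Chernoff bounds with parameter 1/alpha; the
   choice of c makes each of them at most (eps/2) e^{-eta/alpha}, because
   e^{-r} = eps/2 for r = ln(2/eps).  No minimax argument is needed. *)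

Section RealFacts.
Context {R : realType}.

Lemma le_expR_ln (v : R) : 0 <= v -> v <= expR (ln v).
Proof.
by rewrite le_eqVlt => /orP[/eqP<-|v0]; [rewrite ln0 // expR0 | rewrite lnK].
Qed.

Lemma one_le_expR_tails (t dl alpha : R) : 0 < alpha -> dl < `|t| ->
  1 <= expR ((t - dl) / alpha) + expR ((- t - dl) / alpha).
Proof.
move=> a0 dlt.
have one_le_expR u : dl < u -> 1 <= expR ((u - dl) / alpha).
  move=> dlu; apply: le_trans (expR_ge1Dx _).
  by rewrite lerDl divr_ge0 // ?subr_ge0 ?ltW.
case: (lerP 0 t) => t0.
- rewrite ger0_norm // in dlt.
  by apply: le_trans (one_le_expR _ dlt) _; rewrite lerDl expR_ge0.
- rewrite ltr0_norm // in dlt.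
  by apply: le_trans (one_le_expR _ dlt) _; rewrite lerDr expR_ge0.
Qed.

Lemma lerD_div2r (alpha u v w z : R) : 0 < alpha ->
  (u + v / alpha <= w + z / alpha) = (alpha * u + v <= alpha * w + z).
Proof.
move=> a0; rewrite -(ler_pM2l a0) !mulrDr.
by rewrite !(mulrCA alpha _ alpha^-1) mulfV ?gt_eqF // !mulr1.
Qed.

Lemma sup_split_bound (T : Type) (X : set T) (f h : T -> R) (S : R) :
  X !=set0 -> (forall x y, X x -> X y -> f x + h y <= S) ->
  exists A, (forall y, X y -> h y <= A) /\ (forall x, X x -> f x <= S - A).
Proof.
move=> [x0 Xx0] fhS.
have hX0 : [set h y | y in X] !=set0 by exists (h x0), x0.
have hX_sup : has_sup [set h y | y in X].
  split=> //; exists (S - f x0) => _ [y Xy <-].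
  by have := fhS x0 y Xx0 Xy; lra.
exists (sup [set h y | y in X]); split.
  by move=> y Xy; apply: sup_upper_bound => //; exists y.
move=> x Xx; suff : sup [set h y | y in X] <= S - f x by lra.
apply: ge_sup => // _ [y Xy <-].
by have := fhS x y Xx Xy; lra.
Qed.

End RealFacts.

Section Chernoff.
Context {R : realType} {d : measure_display} {Omega : measurableType d}
  (P : {measure set Omega -> \bar R}).
Context {m : nat} {p : 'rV[R]_m -> Omega -> R} {mu : 'rV[R]_m}.
Hypotheses (mp : measurable_fun setT (p mu)) (p_ge0 : forall w, 0 <= p mu w).

Lemma measurable_expR_dens {f : Omega -> R} : measurable_fun setT f ->
  measurable_fun setT (fun w => (expR (f w) * p mu w)%:E).
Proof.
move=> mf; apply/measurable_EFinP; apply: measurable_funM => //.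
exact: measurableT_comp (@measurable_expR R) mf.
Qed.

Lemma expint_shift_le (psi : Omega -> R) (K : R) :
  measurable_fun setT psi -> (expint P p psi mu < +oo)%E ->
  (\int[P]_w (expR (psi w + K) * p mu w)%:E <=
     (expR (lnexpint P p psi mu + K))%:E)%E.
Proof.
move=> mpsi fin.
under eq_integral do rewrite expRD mulrAC EFinM.
have mE := measurable_expR_dens mpsi.
rewrite ge0_integralZr ?lee_fin ?expR_ge0 //; last first.
  by move=> w _; rewrite lee_fin mulr_ge0 ?expR_ge0.
have e0 : (0 <= expint P p psi mu)%E.
  by apply: integral_ge0 => w _; rewrite lee_fin mulr_ge0 ?expR_ge0.
have ef : expint P p psi mu \is a fin_num by rewrite ge0_fin_numE.
rewrite -[X in (X * _)%E](fineK ef) -EFinM lee_fin expRD.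
by rewrite ler_wpM2r ?expR_ge0 // le_expR_ln // fine_ge0.
Qed.

(* Chernoff bound with parameter 1/alpha for each tail of psi + s. *)
Lemma prob_p_abs_gt_le (psi : Omega -> R) (s dl alpha : R) :
  measurable_fun setT psi -> 0 < alpha ->
  (expint P p (fun w => psi w / alpha)%R mu < +oo)%E ->
  (expint P p (fun w => - psi w / alpha)%R mu < +oo)%E ->
  (prob_p P p mu [set w | dl < `|psi w + s|]%R <=
    (expR (lnexpint P p (fun w => psi w / alpha) mu + (s - dl) / alpha)
     + expR (lnexpint P p (fun w => - psi w / alpha) mu + (- s - dl) / alpha))%:E)%E.
Proof.
move=> mpsi a0 fin1 fin2.
set K1 := (s - dl) / alpha; set K2 := (- s - dl) / alpha.
have mpsi1 : measurable_fun setT (fun w => psi w / alpha + K1).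
  by apply: measurable_funD => //; apply: measurable_funM.
have mpsi2 : measurable_fun setT (fun w => - psi w / alpha + K2).
  apply: measurable_funD => //; apply: measurable_funM => //.
  exact: measurable_funN.
set G := fun w => ((expR (psi w / alpha + K1) * p mu w)%R%:E
                  + (expR (- psi w / alpha + K2) * p mu w)%R%:E)%E.
have G_ge0 w : (0 <= G w)%E.
  by rewrite adde_ge0 // lee_fin mulr_ge0 ?expR_ge0.
have mG : measurable_fun setT G.
  by apply: emeasurable_funD; apply: measurable_expR_dens.
set E := [set w | dl < `|psi w + s|].
have mE : measurable E.
  have mh : measurable_fun setT (fun w => `|psi w + s|).
    exact: measurableT_comp (measurable_funD mpsi (measurable_cst s)).
  by have := mh measurableT _ (measurable_itv `]dl, +oo[); rewrite setTI preimage_itvoy.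
rewrite /prob_p; apply: (@le_trans _ _ (\int[P]_(w in E) G w)%E).
  apply: ge0_le_integral => //.
  - by move=> w _; rewrite lee_fin.
  - by apply: measurable_funTS; apply/measurable_EFinP.
  - exact: measurable_funTS.
  move=> w /= dlw; rewrite /G -EFinD lee_fin -mulrDl ler_peMl //.
  have [e1 e2] : psi w / alpha + K1 = (psi w + s - dl) / alpha /\
                 - psi w / alpha + K2 = (- (psi w + s) - dl) / alpha.
    by split; rewrite -mulrDl; congr (_ / _); ring.
  by rewrite e1 e2; apply: one_le_expR_tails.
apply: (@le_trans _ _ (\int[P]_w G w)%E); first exact: ge0_subset_integral.
have dens_ge0 f w : [set: Omega] w -> (0 <= (expR (f w) * p mu w)%:E)%E.
  by move=> _; rewrite lee_fin mulr_ge0 ?expR_ge0.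
rewrite /G ge0_integralD //; try solve [exact: dens_ge0 | exact: measurable_expR_dens].
rewrite EFinD; apply: leeD; apply: expint_shift_le => //.
- exact: measurable_funM.
- exact: measurable_funM (measurable_funN mpsi) _.
Qed.

Lemma deviation_ge0 (M : set 'rV[R]_m) (h : Omega -> R) (delta : R) :
  density_family P M p -> M mu ->
  (prob_p P p mu [set w | delta < `|h w|]%R < 1)%E -> 0 <= delta.
Proof.
move=> hD Mmu; rewrite leNgt; apply: contraPN => delta0.
have -> : [set w | delta < `|h w|] = setT.
  by apply/seteqP; split=> // w _ /=; apply: lt_le_trans delta0 _.
by rewrite /prob_p; have [_ _ ->] := hD _ Mmu; rewrite ltxx.
Qed.

End Chernoff.

Section Estimation.
Context {R : realType} {d : measure_display} {Omega : measurableType d}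
  (P : {measure set Omega -> \bar R}).
Context {m n : nat} {M : set 'rV[R]_m} {p : 'rV[R]_m -> Omega -> R}
  {F : set (Omega -> R)} {X : set 'rV[R]_n} {B : 'M[R]_(n, m)} {b : 'rV[R]_m}
  (g : 'rV[R]_n) {eps : R}.
Hypotheses (hD : density_family P M p) (hF : fin_dim_fun_space F)
  (hG : good_pair P M p F) (X0 : X !=set0)
  (hM : forall x, X x -> M (Aff B b x)) (eps_gt0 : 0 < eps) (eps_lt1 : eps < 1).

Let r := ln (2 / eps).

Lemma expint_div_lt_oo (phi : Omega -> R) (a : R) (mu : 'rV[R]_m) :
  F phi -> M mu -> (expint P p (fun w => phi w / a)%R mu < +oo)%E.
Proof.
have [_ _ _ F_scale _] := hF; have [_ _ _ F_fin] := hG.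
move=> Fphi; apply: (F_fin _ _).1.
suff -> : (fun w => phi w / a) = (fun w => a^-1 * phi w) by exact: F_scale.
by apply/funext => w; rewrite mulrC.
Qed.

Lemma F_opp (phi : Omega -> R) : F phi -> F (fun w => - phi w).
Proof.
have [_ _ _ F_scale _] := hF => Fphi.
suff -> : (fun w => - phi w) = (fun w => -1 * phi w) by exact: F_scale.
by apply/funext => w; rewrite mulN1r.
Qed.

Lemma Risk_le (ghat : Omega -> R) (delta q : R) : q < eps ->
  (forall x, X x ->
    (prob_p P p (Aff B b x) [set w | delta < `|ghat w - dotv g x|]%R <= q%:E)%E) ->
  (Risk P p X B b g ghat eps <= delta%:E)%E.
Proof.
move=> q_lt tail; apply: ereal_inf_lbound; exists delta => //=.
apply: le_lt_trans (_ : q%:E < eps%:E)%E; last by rewrite lte_fin.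
by apply: ge_ereal_sup => _ [x Xx <-]; exact: tail.
Qed.

(* The constant c balances the x-part and the y-part of Phi_r. *)
Lemma tails_le_of_Phi_r_le (phi : Omega -> R) (alpha S eta : R) :
  F phi -> 0 < alpha ->
  (forall x y, X x -> X y -> Phi_r P p B b g r x y phi alpha <= S) ->
  exists c, forall x, X x ->
    (prob_p P p (Aff B b x) [set w | S / 2 + eta < `|phi w + c - dotv g x|]%R
      <= (eps * expR (- (eta / alpha)))%:E)%E.
Proof.
move=> Fphi a0 PhiS.
have [mF _ _ _ _] := hF.
set L1 := fun y => lnexpint P p (fun w => phi w / alpha) (Aff B b y).
set L2 := fun x => lnexpint P p (fun w => - phi w / alpha) (Aff B b x).
have PhiS_split x y : X x -> X y ->
    (dotv g x + alpha * L2 x + alpha * r) + (- dotv g y + alpha * L1 y + alpha * r) <= S.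
  move=> Xx Xy; apply: le_trans (PhiS x y Xx Xy).
  by rewrite /Phi_r /L1 /L2 le_eqVlt; apply/orP; left; apply/eqP; ring.
have [A [LA1 LA2]] := @sup_split_bound _ _ X
  (fun x => dotv g x + alpha * L2 x + alpha * r)
  (fun y => - dotv g y + alpha * L1 y + alpha * r) S X0 PhiS_split.
exists (S / 2 - A) => x Xx; have Mx := hM x Xx; have [mp p_ge0 _] := hD _ Mx.
have -> : [set w | S / 2 + eta < `|phi w + (S / 2 - A) - dotv g x|]%R =
          [set w | S / 2 + eta < `|phi w + (S / 2 - A - dotv g x)|]%R.
  by apply/funext => w /=; rewrite (addrA (phi w) (S / 2 - A)).
apply: le_trans (prob_p_abs_gt_le P mp p_ge0 _ _ _ _ (mF _ Fphi) a0
  (expint_div_lt_oo _ _ _ Fphi Mx) (expint_div_lt_oo _ _ _ (F_opp _ Fphi) Mx)) _.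
have tail1 : L1 x + (S / 2 - A - dotv g x - (S / 2 + eta)) / alpha <= - r + - eta / alpha.
  by rewrite lerD_div2r //; have := LA1 x Xx; lra.
have tail2 : L2 x + (- (S / 2 - A - dotv g x) - (S / 2 + eta)) / alpha <= - r + - eta / alpha.
  by rewrite lerD_div2r //; have := LA2 x Xx; lra.
have expRNr : expR (- r) = eps / 2.
  by rewrite expRN lnK ?invf_div // posrE divr_gt0.
have -> : eps * expR (- (eta / alpha)) = expR (- r + - eta / alpha) + expR (- r + - eta / alpha).
  by rewrite expRD expRNr mulNr -mulrDl -splitr.
by rewrite lee_fin; apply: lerD; rewrite ler_expR.
Qed.

Lemma affine_Risk_le_of_Phi_sup (phi : Omega -> R) (alpha S eta : R) :
  F phi -> 0 < alpha -> 0 < eta ->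
  (Phi_sup P p X B b g r phi alpha <= S%:E)%E ->
  exists c, 0 <= S / 2 + eta /\
    (Risk P p X B b g (fun w => phi w + c)%R eps <= (S / 2 + eta)%:E)%E.
Proof.
move=> Fphi a0 eta0 PhiS.
have Phi_rS x y : X x -> X y -> Phi_r P p B b g r x y phi alpha <= S.
  move=> Xx Xy; rewrite -lee_fin; apply: le_trans PhiS.
  by apply: ereal_sup_ubound; exists (x, y).
have [c tail] := tails_le_of_Phi_r_le _ _ _ eta Fphi a0 Phi_rS.
have tail_lt : eps * expR (- (eta / alpha)) < eps.
  by rewrite -[X in _ < X]mulr1 ltr_pM2l // expR_lt1 oppr_lt0 divr_gt0.
exists c; split; last exact: Risk_le tail_lt tail.
have [x0 Xx0] := X0.
apply: (deviation_ge0 P _ _ _ hD (hM _ Xx0)).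
by apply: le_lt_trans (tail x0 Xx0) _; rewrite lte_fin (lt_trans tail_lt).
Qed.

Lemma exists_affine_Risk_le_Phi_star (delta : R) : 0 < delta ->
  exists phi, exists c : R, F phi /\
    (Risk P p X B b g (fun w => phi w + c)%R eps
       <= Phi_star P p X B b g F r + delta%:E)%E.
Proof.
move=> delta0; rewrite /Phi_star; set I := ereal_inf _.
have near_inf S : (I < S%:E)%E -> exists phi alpha, [/\ F phi, 0 < alpha &
    (Phi_sup P p X B b g r phi alpha <= S%:E)%E].
  by move=> /ereal_inf_lt[_ [[phi alpha] [/= Fphi a0] <-]] /ltW; exists phi, alpha.
case hI : I => [i| |].
- have [phi [alpha [Fphi a0 PhiS]]] : exists phi alpha, [/\ F phi, 0 < alpha &
      (Phi_sup P p X B b g r phi alpha <= (i + delta)%:E)%E].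
    by apply: near_inf; rewrite hI lte_fin ltrDl.
  have [c [_ Rle]] := affine_Risk_le_of_Phi_sup _ _ _ _ Fphi a0 (divr_gt0 delta0 (ltr0Sn _ 1)) PhiS.
  exists phi, c; split=> //; apply: le_trans Rle _.
  by rewrite -EFinM -EFinD lee_fin; lra.
- exists (fun _ => 0), 0; split; first by have [_ F_cst _ _ _] := hF.
  by rewrite mulry gtr0_sg ?invr_gt0 // mul1e addye // leey.
- have [phi [alpha [Fphi a0 PhiS]]] : exists phi alpha, [/\ F phi, 0 < alpha &
      (Phi_sup P p X B b g r phi alpha <= (-1)%:E)%E].
    by apply: near_inf; rewrite hI ltNyr.
  have [c [level_ge0 _]] :=
    affine_Risk_le_of_Phi_sup _ _ _ _ Fphi a0 (divr_gt0 ltr01 (ltr0Sn _ 3)) PhiS.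
  by move: level_ge0; lra.
Qed.

End Estimation.

Theorem lemma3p1 (R : realType) (T : completePseudoMetricType R)
  (P : {measure set (g_sigma_algebraType (@open T)) -> \bar R})
  (m n : nat) (M : set 'rV[R]_m)
  (p : 'rV[R]_m -> g_sigma_algebraType (@open T) -> R)
  (F : set (g_sigma_algebraType (@open T) -> R))
  (X : set 'rV[R]_n) (B : 'M[R]_(n, m)) (b : 'rV[R]_m) (g : 'rV[R]_n) :
  polish T ->
  sigma_finite setT P ->
  density_family P M p ->
  fin_dim_fun_space F ->
  good_pair P M p F ->
  X !=set0 -> convex_set X -> compact X ->
  (forall x, X x -> M (Aff B b x)) ->
  forall eps : R, 0 < eps < 1 ->
    (RiskA P p X B b g F eps <= Phi_star P p X B b g F (ln (2 / eps)))%E /\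
    (forall delta : R, 0 < delta ->
       exists phi, exists c : R, F phi /\
         (Risk P p X B b g (fun w => (phi w + c)%R) eps
            <= Phi_star P p X B b g F (ln (2 / eps)) + delta%:E)%E).
Proof.
move=> _ _ hD hF hG X0 _ _ hM eps /andP[eps_gt0 eps_lt1].
have approx := exists_affine_Risk_le_Phi_star P g hD hF hG X0 hM eps_gt0 eps_lt1.
split=> //; apply/lee_addgt0Pr => delta delta0.
have [phi [c [Fphi Risk_phi]]] := approx delta delta0.
apply: le_trans Risk_phi; apply: ereal_inf_lbound; exists (fun w => phi w + c)%R => //.
by have [_ F_cst F_add _ _] := hF; exact: F_add Fphi (F_cst c).
Qed.
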